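(* Suppose Assumptions 1–5 hold and the set $\Theta^*$ of equilibrium models is finite. Write $\Theta^*\cup\{0,1\}=\{\theta_0,\theta_1,\dots,\theta_N\}$ with $0=\theta_0<\theta_1<\dots<\theta_N=1$. Then for each $n\in\{0,\dots,N-1\}$, exactly one of the following holds: (i) for every $\theta\in(\theta_n,\theta_{n+1})$ and every $x\in F(\delta_\theta)$, $\theta(\delta_x)>\theta$; (ii) for every $\theta\in(\theta_n,\theta_{n+1})$ and every $x\in F(\delta_\theta)$, $\theta(\delta_x)<\theta$.
   Context: Setting. $X$ is a finite set of actions, $Y$ a set of consequences, $Q:X\to\Delta Y$ the true consequence function, and $\{Q_\theta:\theta\in\Theta\}$ the agent's models with $\Theta=[0,1]$. Assumptions 1–2: $Y$ is a compact subset of a Euclidean space; there is a Borel probability measure $\nu$ on $Y$ with $Q(\cdot\mid x),Q_\theta(\cdot\mid x)\ll\nu$, densities $q(\cdot\mid x)$, $q_\theta(\cdot\mid x)$; $\theta\mapsto q_\theta(\cdot\mid x)$ is continuous $Q(\cdot\mid x)$-a.s.; for each $x$ there is $g_x\in L^2(Y,Q(\cdot\mid x))$ with $|\ln(q(y\mid x)/q_\theta(y\mid x))|\le g_x(y)$ for all $\theta$, $Q(\cdot\mid x)$-a.s. Assumption 3: the prior has full support on $\Theta$. Assumption 4: the policy correspondence $F:\Delta\Theta\rightrightarrows X$ (nonempty-valued, $\Delta\Theta$ = Borel probability measures on $\Theta$) is upper hemicontinuous. $\delta_\theta$ is the point mass at $\theta\in\Theta$, $\delta_x\in\Delta X$ the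 point mass at action $x$; for $S\subseteq X$, $\Delta S$ is the set of distributions on $X$ supported in $S$; $F(A)=\bigcup_{\mu\in A}F(\mu)$ for $A\subseteq\Delta\Theta$. KLD: $K(\theta,\sigma)=\sum_x\sigma(x)\int\ln\frac{q(y\mid x)}{q_\theta(y\mid x)}q(y\mid x)\nu(dy)$ for $\sigma\in\Delta X$. Assumption 5 (identifiability): (i) for each $\sigma\in\Delta X$, $K(\cdot,\sigma)$ has a unique minimizer $\theta(\sigma)\in[0,1]$; (ii) for each $\sigma$ with $\theta(\sigma)\in(0,1)$, $K(\cdot,\sigma)$ is twice differentiable at $\theta(\sigma)$ with positive second derivative there. Equilibrium: $\sigma\in\Delta X$ with $\sigma\in\Delta F(\{\delta_{\theta(\sigma)}\})$, i.e. $\sigma$ is supported in $F(\delta_{\theta(\sigma)})$. A model $\theta^*\in[0,1]$ is an equilibrium model if $\theta^*=\theta(\sigma^* )$ for some equilibrium $\sigma^*$; $\Theta^*$ is the set of equilibrium models. *)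

From HB Require Import structures.
From mathcomp Require Import all_boot all_order all_algebra.
From mathcomp Require Import all_classical all_reals all_analysis.
From mathcomp Require Import matrix_topology matrix_normedtype.
Import Order.TTheory GRing.Theory Num.Theory.
Import numFieldNormedType.Exports.

Set Implicit Arguments.
Unset Strict Implicit.
Unset Printing Implicit Defensive.

Local Open Scope classical_set_scope.
Local Open Scope ring_scope.

Definition euclid (R : realType) (d : nat) :=
  g_sigma_algebraType (@open 'rV[R]_d).

(* The real line as a Borel measurable space; the parameter space
   Theta = [0,1] sits inside it. *)
Notation BorelR R := (measurableTypeR R).

Definition unit_itv (R : realType) : set (BorelR R) := [set t : R | 0 <= t <= 1].
Arguments unit_itv : clear implicits.

Definition inDeltaX (R : realType) (X : finType) (sigma : X -> R) : Prop :=
  (forall x, 0 <= sigma x) /\ \sum_(x : X) sigma x = 1.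

Definition pmass (R : realType) (X : finType) (x : X) : X -> R :=
  fun x' => if x' == x then 1 else 0.

(* Delta Theta : Borel probability measures on Theta = [0,1], represented as
   Borel probability measures on R giving full mass to [0,1]. *)
Definition inDeltaTheta (R : realType)
    (mu : {measure set (BorelR R) -> \bar R}) : Prop :=
  mu setT = 1%E /\ mu (unit_itv R) = 1%E.

Definition KLD (R : realType) (d : nat) (X : finType)
    (nu : {measure set (euclid R d) -> \bar R}) (Y : set (euclid R d))
    (q : X -> euclid R d -> R) (qth : R -> X -> euclid R d -> R)
    (theta : R) (sigma : X -> R) : R :=
  \sum_(x : X) sigma x *
     Rintegral nu Y (fun y => ln (q x y / qth theta x y) * q x y).

Definition unique_minimizer01 (R : realType) (f : R -> R) (t : R) : Prop :=
  unit_itv R t /\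
  (forall s, unit_itv R s -> f t <= f s) /\
  (forall s, unit_itv R s -> f s <= f t -> s = t).

Definition twice_diff_pos2 (R : realType) (f : R -> R) (t : R) : Prop :=
  (\forall s \near t, derivable f s 1) /\
  derivable (derive1 f) t 1 /\
  0 < derive1 (derive1 f) t.

(* Upper hemicontinuity of F : Delta Theta => X, Delta Theta carrying the
   topology of weak convergence (sub-basic neighbourhoods given by finitely
   many continuous test functions on [0,1]) and X the discrete topology
   (so every subset of X is open). *)
Definition weak_nbhd (R : realType) (mu : {measure set (BorelR R) -> \bar R})
    (W : {measure set (BorelR R) -> \bar R} -> Prop) : Prop :=
  exists (n : nat) (f : nat -> R -> R) (e : R),
    0 < e /\
    (forall i, (i < n)%N -> {within unit_itv R, continuous (f i)}) /\
    (forall mu' : {measure set (BorelR R) -> \bar R}, inDeltaTheta mu' ->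
       (forall i, (i < n)%N ->
          `| Rintegral mu' (unit_itv R) (f i)
             - Rintegral mu (unit_itv R) (f i) | < e) ->
       W mu').

Definition uhc (R : realType) (X : finType)
    (F : {measure set (BorelR R) -> \bar R} -> set X) : Prop :=
  forall mu, inDeltaTheta mu ->
  forall V : set X, F mu `<=` V ->
    weak_nbhd mu (fun mu' => F mu' `<=` V).

Definition full_support01 (R : realType)
    (mu : {measure set (BorelR R) -> \bar R}) : Prop :=
  forall O : set R, open O -> (O `&` unit_itv R) !=set0 ->
    (0 < mu (O `&` unit_itv R))%E.

Definition dirac_at (R : realType) (t : R) : {measure set (BorelR R) -> \bar R} :=
  @dirac _ (BorelR R) t R.

Definition equilibrium (R : realType) (X : finType)
    (F : {measure set (BorelR R) -> \bar R} -> set X)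
    (thetaS : (X -> R) -> R) (sigma : X -> R) : Prop :=
  inDeltaX sigma /\ (forall x, 0 < sigma x -> F (dirac_at (thetaS sigma)) x).

Definition equilibrium_models (R : realType) (X : finType)
    (F : {measure set (BorelR R) -> \bar R} -> set X)
    (thetaS : (X -> R) -> R) : set R :=
  [set t | exists sigma, equilibrium F thetaS sigma /\ t = thetaS sigma].

(* Between consecutive points a < b of Theta^* u {0, 1} no model is an
   equilibrium model. At a model t in ]a, b[ no optimal action x can have
   theta(delta_x) = t, and no two optimal actions can point to opposite sides
   of t: by Berge's maximum theorem the KL-minimiser of their mixtures moves
   continuously from one side of t to the other, so some mixture, still
   supported in F(delta_t), would have t as its model. Hence every t in ]a, b[
   points either up or down. Upper hemicontinuity of F and finiteness of X
   make both sets of such t open, and connectedness of ]a, b[ leaves only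
   one of them. *)

From HB Require Import structures.
From mathcomp Require Import all_boot all_order all_algebra.
From mathcomp Require Import all_classical all_reals all_analysis.
From mathcomp Require Import matrix_topology matrix_normedtype.
From mathcomp Require Import ring lra measurable_realfun.
Import Order.TTheory GRing.Theory Num.Theory.
Import numFieldNormedType.Exports.
Local Open Scope classical_set_scope.
Local Open Scope ring_scope.

Set Implicit Arguments.
Unset Strict Implicit.
Unset Printing Implicit Defensive.

Lemma within_continuous_of_dist (R : realType) (A : set R) (f : R -> R) :
  (forall x, A x -> forall e, 0 < e -> exists2 d, 0 < d &
     forall t, A t -> `|t - x| < d -> `|f t - f x| < e) ->
  {within A, continuous f}.
Proof.
move=> fA; apply/subspace_continuousP => x Ax; apply/cvgrPdist_lt => e e0.
have [d d0 fd] := fA x Ax e e0; apply/nbhs_ballP; exists d => //= t xt At.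
by rewrite distrC fd // distrC.
Qed.

Lemma within_continuous_seq (R : realType) (A : set R) (f : R -> R) (x : R)
    (u : nat -> R) :
  {within A, continuous f} -> A x -> (forall n, A (u n)) ->
  u n @[n --> \oo] --> x -> f (u n) @[n --> \oo] --> f x.
Proof.
move=> /subspace_continuousP fA Ax Au ux; apply: cvg_comp (fA x Ax) => P.
by move=> /ux [N _ uP]; exists N => // n /uP; apply; exact: Au.
Qed.

Lemma cvg_within_of_seq (R : realType) (A : set R) (f : R -> R) (x l : R) :
  (forall u : nat -> R, (forall n, A (u n)) -> u n @[n --> \oo] --> x ->
     f (u n) @[n --> \oo] --> l) ->
  f t @[t --> within A (nbhs x)] --> l.
Proof.
move=> fseq; apply/cvgrPdist_lt => e e0; apply: contrapT => fnear.
have far n : exists t, [/\ A t, `|t - x| < n.+1%:R^-1 & e <= `|l - f t|].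
  apply: contrapT => nofar; apply: fnear; apply/nbhs_ballP.
  exists n.+1%:R^-1 => //= t; rewrite /ball /= distrC => xt At.
  by rewrite ltNge; apply/negP => le_e; apply: nofar; exists t.
have [u uP] := choice far.
have ux : u n @[n --> \oo] --> x.
  apply/cvgrPdist_lt => e' e'0.
  move: (@cvg_harmonic R) => /cvgrPdist_lt/(_ e' e'0); apply: filterS => n.
  rewrite /harmonic /= sub0r normrN ger0_norm // => n_e'.
  by have [_ ux _] := uP n; rewrite distrC (lt_trans ux).
have uA n : A (u n) by case: (uP n).
have /cvgrPdist_lt/(_ e e0)/filter_ex [n] := fseq u uA ux.
by have [_ _] := uP n; rewrite leNgt => /negP.
Qed.

Lemma unit_itvE (R : realType) : unit_itv R = `[0, 1]%classic.
Proof. by apply/seteqP; split => t /=; rewrite in_itv. Qed.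

Lemma compact_unit_itv (R : realType) : compact (unit_itv R).
Proof. by rewrite unit_itvE; exact: segment_compact. Qed.

Lemma within_continuous_unit_itv_bounded (R : realType) (f : R -> R) :
  {within unit_itv R, continuous f} ->
  exists2 M, 0 < M & forall t, unit_itv R t -> `|f t| <= M.
Proof.
move=> fc; have nfc : {within unit_itv R, continuous (fun t => `|f t|)}.
  by move=> t; apply: cvg_norm; exact: fc.
have [|c _ cmax] := compact_EVT_max _ (@compact_unit_itv R) nfc.
  by exists 0; rewrite /unit_itv /= lexx ler01.
exists (`|f c| + 1) => [|t ut]; first by rewrite ltr_pwDr.
by rewrite (le_trans (cmax t _)) ?inE ?lerDl.
Qed.

(* Compactness of [0,1] turns uniqueness of the minimiser into a uniform gap
   away from it. *)
Lemma unique_minimizer01_gap (R : realType) (f : R -> R) (t0 e : R) :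
  {within unit_itv R, continuous f} -> unique_minimizer01 f t0 -> 0 < e ->
  exists2 g, 0 < g &
    forall t, unit_itv R t -> e <= `|t - t0| -> f t0 + g <= f t.
Proof.
move=> fc [ut0 [_ t0_uniq]] e0.
pose C := unit_itv R `&` ~` ball t0 e.
have inC t : unit_itv R t -> e <= `|t - t0| -> C t.
  by move=> ut; rewrite /C /ball /= distrC leNgt => /negP.
have [[c Cc]|C0] := pselect (C !=set0); last first.
  exists 1 => // t ut et; exfalso; apply: C0; exists t; exact: inC.
have Ccompact : compact C.
  apply: (subclosed_compact _ (@compact_unit_itv R)); last exact: subIsetl.
  apply: closedI; last exact/open_closedC/ball_open.
  exact: compact_closed (@compact_unit_itv R).
have fcC : {within C, continuous f}.
  by apply: continuous_subspaceW fc; exact: subIsetl.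
have [m /set_mem[um nbm] mmin] := compact_EVT_min (ex_intro _ c Cc) Ccompact fcC.
exists (f m - f t0) => [|t ut et]; last first.
  by rewrite addrC subrK; apply: mmin; rewrite inE; exact: inC.
rewrite subr_gt0 ltNge; apply/negP => fm; apply: nbm.
by rewrite (t0_uniq m um fm); exact: ballxx.
Qed.

(* Berge's maximum theorem for the mixtures l * k1 + (1 - l) * k2: the objective
   moves by at most |l - l0| sup |k1 - k2|, which stays below the gap. *)
Lemma continuous_mixture_argmin01 (R : realType) (k1 k2 th : R -> R) :
  {within unit_itv R, continuous k1} -> {within unit_itv R, continuous k2} ->
  (forall l, unit_itv R l ->
     unique_minimizer01 (fun t => l * k1 t + (1 - l) * k2 t) (th l)) ->
  {within unit_itv R, continuous th}.
Proof.
move=> k1c k2c th_min; apply: within_continuous_of_dist => l0 ul0 e e0.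
pose h l t := l * k1 t + (1 - l) * k2 t.
have [M M0 kM] : exists2 M, 0 < M & forall t, unit_itv R t -> `|k1 t - k2 t| <= M.
  apply: within_continuous_unit_itv_bounded => t.
  by apply: cvgB; [exact: k1c|exact: k2c].
have hc : {within unit_itv R, continuous (h l0)}.
  by move=> t; apply: cvgD; apply: cvgMr; [exact: k1c|exact: k2c].
have [g g0 gap] := unique_minimizer01_gap hc (th_min l0 ul0) e0.
exists (g / (2 * M)) => [|l ul ll0]; first by rewrite divr_gt0 ?mulr_gt0.
have h_close t : unit_itv R t -> `|h l t - h l0 t| < g / 2.
  move=> ut; have -> : h l t - h l0 t = (l - l0) * (k1 t - k2 t).
    by rewrite /h; ring.
  rewrite normrM (@le_lt_trans _ _ (`|l - l0| * M)) ?ler_wpM2l ?kM //.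
  by rewrite -ltr_pdivlMr // -mulrA -invfM.
have [uth [th_le _]] := th_min l ul; have [uth0 _] := th_min l0 ul0.
rewrite ltNge; apply/negP => far.
have := gap _ uth far; have := th_le _ uth0.
have := h_close _ uth; have := h_close _ uth0; rewrite !ltr_norml /h.
move=> /andP[? ?] /andP[? ?]; lra.
Qed.

Lemma connected_open_dichotomy (T : topologicalType) (A U V : set T) :
  connected A -> open U -> open V -> A `<=` U `|` V -> A `&` U `&` V = set0 ->
  A `<=` U \/ A `<=` V.
Proof.
move=> Ac Uo Vo AUV AUV0.
have [[t [At Ut]]|AU0] := pselect (A `&` U !=set0); [left|right]; last first.
  move=> s As; case: (AUV s As) => // Us; exfalso; apply: AU0; by exists s.
have AUE : A `&` U = A `&` ~` V.
  apply/seteqP; split => s [As Us]; split => //.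
    by move=> Vs; have : (A `&` U `&` V) s by []; rewrite AUV0.
  by case: (AUV s As).
have -> : A = A `&` U; last exact: subIsetr.
apply/esym/Ac; [by exists t | by exists U | exists (~` V)].
  exact: open_closedC.
exact: AUE.
Qed.

(* A uniform bound on |ln (a / v n)| keeps v n away from 0+, so the junk value
   ln 0 = 0 is the limit when v tends to 0. *)
Lemma cvg_ln_div (R : realType) (a l M : R) (v : nat -> R) :
  0 < a -> (forall n, 0 <= v n) -> v n @[n --> \oo] --> l ->
  (forall n, `|ln (a / v n)| <= M) ->
  ln (a / v n) @[n --> \oo] --> ln (a / l).
Proof.
move=> a0 v_ge0 vl lnM; have [l0|l_le0] := ltP 0 l.
  apply: continuous_cvg; first exact: continuous_ln (divr_gt0 a0 l0).
  by apply: cvgM; [exact: cvg_cst|exact: cvgV (lt0r_neq0 l0) vl].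
have al_le0 : a / l <= 0 by rewrite mulr_ge0_le0 ?invr_le0 // ltW.
rewrite (ln0 al_le0); apply: cvg_near_cst.
have eta0 : 0 < a / expR (M + 1) by rewrite divr_gt0 ?expR_gt0.
apply: filterS (cvgr_lt _ vl _ (le_lt_trans l_le0 eta0)) => n vn_small.
have [->|vn0] := eqVneq (v n) 0; first by rewrite invr0 mulr0 ln0.
have vn_gt0 : 0 < v n by rewrite lt0r vn0 v_ge0.
have : M + 1 < ln (a / v n).
  rewrite -[X in X < _]expRK ltr_ln ?posrE ?expR_gt0 ?divr_gt0 //.
  by rewrite ltr_pdivlMr // mulrC -ltr_pdivlMr ?expR_gt0.
by have := lnM n; rewrite ler_norml => /andP[_]; lra.
Qed.

Lemma measurable_invR (R : realType) : measurable_fun [set: R] (@GRing.inv R).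
Proof.
have -> : [set: R] = [set~ 0] `|` [set 0].
  apply/seteqP; split => x //= _.
  by case: (eqVneq x 0) => [->|/eqP]; [right|left].
apply/measurable_funU.
- by apply: measurableC; exact: measurable_set1.
- exact: measurable_set1.
split; last exact: measurable_fun_set1.
apply: open_continuous_measurable_fun.
  apply: closed_openC; apply: compact_closed; first exact: Rhausdorff.
  exact: compact_set1.
by move=> x; rewrite inE /= => /eqP x0; exact: inv_continuous.
Qed.

Lemma measurable_fun_llr d (T : measurableType d) (R : realType) (Y : set T)
    (q p : T -> R) :
  measurable_fun Y q -> measurable_fun Y p ->
  measurable_fun Y (fun y => ln (q y / p y) * q y).
Proof.
move=> mq mp; apply: (measurable_funM _ mq).
apply: measurableT_comp; first exact: measurable_ln.
by apply: (measurable_funM mq); exact: measurableT_comp (@measurable_invR R) mp.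
Qed.

Section expected_log_likelihood_ratio.
Context d (T : measurableType d) (R : realType) (nu : {measure set T -> \bar R}).
Variables (Y : set T) (A : set R) (q : T -> R) (p : R -> T -> R) (g : T -> R).
Hypothesis mY : measurable Y.
Hypothesis mq : measurable_fun Y q.
Hypothesis q_ge0 : forall y, Y y -> 0 <= q y.
Hypothesis q_int : (\int[nu]_(y in Y) (q y)%:E < +oo)%E.
Hypothesis mp : forall t, A t -> measurable_fun Y (p t).
Hypothesis p_ge0 : forall t y, A t -> Y y -> 0 <= p t y.
Hypothesis p_cont : {ae nu, forall y, Y y -> 0 < q y ->
  {within A, continuous (fun t => p t y)}}.
Hypothesis mg : measurable_fun Y g.
Hypothesis g2q_int : (\int[nu]_(y in Y) (g y ^+ 2 * q y)%:E < +oo)%E.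
Hypothesis llr_le : forall t, A t ->
  {ae nu, forall y, Y y -> 0 < q y -> `|ln (q y / p t y)| <= g y}.

(* |g| q <= g^2 q + q *)
Lemma integrable_abs_dominator : nu.-integrable Y (fun y => (`|g y| * q y)%:E).
Proof.
have mgq : measurable_fun Y (fun y => (`|g y| * q y)%:E).
  by apply/measurable_EFinP/measurable_funM => //; exact: measurableT_comp.
apply/integrableP; split => //.
have mg2q : measurable_fun Y (fun y => (g y ^+ 2 * q y)%:E).
  apply/measurable_EFinP; rewrite (_ : (fun y => _) = (g \* g) \* q).
    exact/measurable_funM/mq/measurable_funM.
  by apply/funext => y; rewrite /= expr2.
rewrite (@eq_integral _ _ _ nu Y (fun y => (`|g y| * q y)%:E)); last first.
  by move=> y /[!inE] Yy; rewrite abse_EFin ger0_norm // mulr_ge0 ?q_ge0.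
have mq' : measurable_fun Y (fun y => (q y)%:E) by exact/measurable_EFinP.
apply: le_lt_trans (ge0_le_integral nu mY _ mgq (emeasurable_funD mg2q mq') _) _.
- by move=> y Yy; rewrite lee_fin mulr_ge0 ?q_ge0.
- move=> y Yy; rewrite -EFinD lee_fin -[X in _ <= _ + X]mul1r -mulrDl.
  apply: ler_wpM2r; first exact: q_ge0.
  rewrite -(real_normK (num_real (g y))); have := normr_ge0 (g y); nra.
rewrite ge0_integralD //; first exact: lte_add_pinfty.
by move=> y Yy; rewrite lee_fin mulr_ge0 ?sqr_ge0 ?q_ge0.
Qed.

Lemma cvg_llr_integral_seq (u : nat -> R) (t0 : R) :
  (forall n, A (u n)) -> A t0 -> u n @[n --> \oo] --> t0 ->
  Rintegral nu Y (fun y => ln (q y / p (u n) y) * q y) @[n --> \oo] -->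
  Rintegral nu Y (fun y => ln (q y / p t0 y) * q y).
Proof.
move=> Au At0 ut0.
pose f_ n y := (ln (q y / p (u n) y) * q y)%:E.
pose f y := (ln (q y / p t0 y) * q y)%:E.
have mf_ n : measurable_fun Y (f_ n).
  by apply/measurable_EFinP/measurable_fun_llr => //; exact: mp.
have mf : measurable_fun Y f.
  by apply/measurable_EFinP/measurable_fun_llr => //; exact: mp.
have llr_le_u :
    {ae nu, forall y n, Y y -> 0 < q y -> `|ln (q y / p (u n) y)| <= g y}.
  by apply: ae_foralln => n; exact: llr_le.
have f_dom : {ae nu, forall y n, Y y -> (`|f_ n y| <= (`|g y| * q y)%:E)%E}.
  apply: filterS llr_le_u => y le_g n Yy; rewrite abse_EFin lee_fin normrM.
  rewrite (ger0_norm (q_ge0 Yy)) ler_wpM2r ?q_ge0 //.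
  have [q0|qn0] := eqVneq (q y) 0; first by rewrite q0 mul0r ln0 ?normr0.
  by rewrite (le_trans (le_g n Yy _)) ?ler_norm // lt0r qn0 q_ge0.
have f_cvg : {ae nu, forall y, Y y -> f_ ^~ y @ \oo --> f y}.
  apply: filterS2 p_cont llr_le_u => y p_cont_y le_g Yy.
  apply/cvg_EFin; first exact: nearW.
  have [q0|qn0] := eqVneq (q y) 0.
    rewrite /f q0 mulr0; apply: cvg_near_cst.
    by apply: nearW => n; rewrite /= q0 mulr0.
  have q_gt0 : 0 < q y by rewrite lt0r qn0 q_ge0.
  rewrite /comp /f_ /=; apply: cvgMl.
  apply: (cvg_ln_div q_gt0 _ _ (fun n => le_g n Yy q_gt0)).
  - by move=> n; exact: p_ge0.
  - exact: within_continuous_seq (p_cont_y Yy q_gt0) At0 Au ut0.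
have [f_int _ cvg_int] :=
  dominated_convergence mY mf_ mf f_cvg integrable_abs_dominator f_dom.
apply: (@fine_cvg _ _ _ _ (fun n => \int[nu]_(y in Y) f_ n y)%E).
by rewrite fineK //; exact: integrable_fin_num.
Qed.

Lemma continuous_llr_integral :
  {within A, continuous
    (fun t => Rintegral nu Y (fun y => ln (q y / p t y) * q y))}.
Proof.
apply/subspace_continuousP => t0 At0; apply: cvg_within_of_seq => u Au ut0.
exact: cvg_llr_integral_seq.
Qed.

End expected_log_likelihood_ratio.

Lemma pmass_sumM (R : realType) (X : finType) (x : X) (c : X -> R) :
  \sum_z pmass R x z * c z = c x.
Proof.
rewrite (bigD1 x) //= /pmass eqxx mul1r big1 ?addr0 // => z /negbTE ->.
exact: mul0r.
Qed.

Lemma inDeltaX_pmass (R : realType) (X : finType) (x : X) : inDeltaX (pmass R x).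
Proof.
split=> [z|]; first by rewrite /pmass; case: ifP.
by rewrite -[RHS](pmass_sumM x (fun=> 1)); apply: eq_bigr => z _; rewrite mulr1.
Qed.

Definition pmix (R : realType) (X : finType) (l : R) (x x' : X) : X -> R :=
  fun z => l * pmass R x z + (1 - l) * pmass R x' z.

Lemma pmix_sumM (R : realType) (X : finType) (l : R) (x x' : X) (c : X -> R) :
  \sum_z pmix l x x' z * c z = l * c x + (1 - l) * c x'.
Proof.
under eq_bigr do rewrite /pmix mulrDl -!mulrA.
by rewrite big_split /= -!big_distrr /= !pmass_sumM.
Qed.

Lemma inDeltaX_pmix (R : realType) (X : finType) (l : R) (x x' : X) :
  unit_itv R l -> inDeltaX (pmix l x x').
Proof.
move=> /andP[l_ge0 l_le1]; split=> [z|].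
  by rewrite addr_ge0 // mulr_ge0 ?subr_ge0 // /pmass; case: ifP.
under eq_bigr do rewrite -[pmix _ _ _ _]mulr1.
by rewrite pmix_sumM !mulr1 addrC subrK.
Qed.

Lemma pmix0 (R : realType) (X : finType) (x x' : X) : pmix 0 x x' = pmass R x'.
Proof. by apply/funext => z; rewrite /pmix mul0r add0r subr0 mul1r. Qed.

Lemma pmix1 (R : realType) (X : finType) (x x' : X) : pmix 1 x x' = pmass R x.
Proof. by apply/funext => z; rewrite /pmix mul1r subrr mul0r addr0. Qed.

Lemma pmix_support (R : realType) (X : finType) (l : R) (x x' z : X) :
  0 < pmix l x x' z -> z = x \/ z = x'.
Proof.
rewrite /pmix /pmass; case: eqP => [->|_]; first by left.
by case: eqP => [->|_]; [right|rewrite !mulr0 addr0 ltxx].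
Qed.

Lemma inDeltaTheta_dirac (R : realType) (t : R) :
  unit_itv R t -> inDeltaTheta (dirac_at t).
Proof.
move=> ut; split; rewrite /dirac_at /= ?diracT //.
by rewrite (@diracE _ (BorelR R)) mem_set.
Qed.

Lemma Rintegral_dirac_at (R : realType) (f : R -> R) (t : R) :
  {within unit_itv R, continuous f} -> unit_itv R t ->
  Rintegral (dirac_at t) (unit_itv R) f = f t.
Proof.
move=> fc ut; have mU : measurable (unit_itv R).
  by rewrite unit_itvE; exact: measurable_itv.
have mf : measurable_fun (unit_itv R) f.
  exact: subspace_continuous_measurable_fun.
rewrite /Rintegral /dirac_at integral_dirac //; last exact/measurable_EFinP.
by rewrite (@diracE _ (BorelR R)) mem_set // mul1e.
Qed.

Section direction_of_model_updates.
Variables (R : realType) (X : finType) (k : X -> R -> R).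
Variables (F : {measure set (BorelR R) -> \bar R} -> set X).
Variable thetaS : (X -> R) -> R.
Hypothesis k_cont : forall x, {within unit_itv R, continuous (k x)}.
Hypothesis thetaS_argmin : forall sigma, inDeltaX sigma ->
  unique_minimizer01 (fun t => \sum_x sigma x * k x t) (thetaS sigma).
Hypothesis F_neq0 : forall mu, inDeltaTheta mu -> F mu !=set0.
Hypothesis F_uhc : uhc F.

Lemma thetaS_unit sigma : inDeltaX sigma -> unit_itv R (thetaS sigma).
Proof. by move=> /thetaS_argmin []. Qed.

Lemma equilibrium_models_unit t : equilibrium_models F thetaS t -> unit_itv R t.
Proof. by move=> [sigma [[/thetaS_unit + _] ->]]. Qed.

Lemma equilibrium_model_pmass t x :
  F (dirac_at t) x -> thetaS (pmass R x) = t -> equilibrium_models F thetaS t.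
Proof.
move=> Fx thx; exists (pmass R x); split => //; split; first exact: inDeltaX_pmass.
by rewrite thx => z; rewrite /pmass; case: eqP => [->|_]; rewrite ?ltxx.
Qed.

Lemma continuous_thetaS_pmix x x' :
  {within unit_itv R, continuous (fun l => thetaS (pmix l x x'))}.
Proof.
apply: (continuous_mixture_argmin01 (@k_cont x) (@k_cont x')) => l ul.
rewrite -(funext (fun t => pmix_sumM l x x' (k^~ t))).
exact/thetaS_argmin/inDeltaX_pmix.
Qed.

(* Intermediate value theorem along the mixtures l delta_x + (1 - l) delta_x'. *)
Lemma equilibrium_model_between t x x' :
  F (dirac_at t) x -> F (dirac_at t) x' ->
  thetaS (pmass R x') < t < thetaS (pmass R x) -> equilibrium_models F thetaS t.
Proof.
move=> Fx Fx' /andP[x't tx].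
have [l] : exists2 l, l \in `[0, 1] & thetaS (pmix l x x') = t.
  apply: IVT; first exact: ler01.
    by rewrite -unit_itvE; exact: continuous_thetaS_pmix.
  by rewrite pmix0 pmix1 ge_min le_max (ltW x't) (ltW tx) orbT.
rewrite in_itv => ul thl; exists (pmix l x x'); split => //.
split; first exact: inDeltaX_pmix.
by rewrite thl => z /pmix_support [->|->].
Qed.

Definition updates_up t := forall x, F (dirac_at t) x -> t < thetaS (pmass R x).
Definition updates_down t := forall x, F (dirac_at t) x -> thetaS (pmass R x) < t.

Lemma updates_up_or_down t :
  ~ equilibrium_models F thetaS t -> updates_up t \/ updates_down t.
Proof.
move=> not_eq; have thx_neq x : F (dirac_at t) x -> thetaS (pmass R x) != t.
  by move=> Fx; apply/eqP => /(equilibrium_model_pmass Fx).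
apply: contrapT => /not_orP[/existsNP[x /not_implyP[Fx +]]].
move=> /negP; rewrite -leNgt le_eqVlt (negbTE (thx_neq x Fx)) /= => xt.
move=> /existsNP[x' /not_implyP[Fx' /negP]].
rewrite -leNgt le_eqVlt eq_sym (negbTE (thx_neq x' Fx')) /= => tx'.
by apply/not_eq/(equilibrium_model_between Fx' Fx); rewrite xt tx'.
Qed.

Lemma updates_up_down_disjoint t :
  unit_itv R t -> updates_up t -> updates_down t -> False.
Proof.
move=> ut up down; have [x Fx] := F_neq0 (inDeltaTheta_dirac ut).
by have := lt_trans (up x Fx) (down x Fx); rewrite ltxx.
Qed.

Lemma near_F_dirac_subset t : unit_itv R t ->
  \forall s \near t, unit_itv R s -> F (dirac_at s) `<=` F (dirac_at t).
Proof.
move=> ut; have [n [f [e [e0 [fc W]]]]] :=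
  F_uhc (inDeltaTheta_dirac ut) (@subset_refl _ (F (dirac_at t))).
have f_near (i : 'I_n) :
    \forall s \near t, unit_itv R s -> `|f i t - f i s| < e.
  move: (fc i (ltn_ord i)) => /subspace_continuousP/(_ t ut).
  by move=> /cvgrPdist_lt/(_ e e0).
apply: filterS (filter_forall _ f_near) => s f_close us.
apply: W (inDeltaTheta_dirac us) _ => i ni.
have fic := fc i ni.
by rewrite !Rintegral_dirac_at // distrC (f_close (Ordinal ni)).
Qed.

Lemma near_updates (r : R -> R -> bool) t : 0 < t < 1 ->
  (forall c, open [set s | r s c]) ->
  (forall x, F (dirac_at t) x -> r t (thetaS (pmass R x))) ->
  \forall s \near t, forall x, F (dirac_at s) x -> r s (thetaS (pmass R x)).
Proof.
move=> /andP[t0 t1] r_open rt.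
have ut : unit_itv R t by apply/andP; split; apply: ltW.
have near_unit : \forall s \near t, unit_itv R s.
  have : nbhs t `]0, 1[%classic.
    apply: open_nbhs_nbhs; split; first exact: itv_open.
    by rewrite /= in_itv /= t0 t1.
  apply: filterS => s; rewrite /= in_itv /= => /andP[? ?].
  by apply/andP; split; apply: ltW.
have near_r (x : X) :
    \forall s \near t, F (dirac_at t) x -> r s (thetaS (pmass R x)).
  have [Fx|nFx] := pselect (F (dirac_at t) x); last by apply: filterE => s /nFx.
  have : nbhs t [set s | r s (thetaS (pmass R x))].
    by apply: open_nbhs_nbhs; split; [exact: r_open|exact: rt].
  by apply: filterS.
apply: filterS3 near_unit (near_F_dirac_subset ut) (filter_forall _ near_r).
by move=> s us Fst rs x Fsx; exact/rs/(Fst us).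
Qed.

Lemma updates_up_xor_down a b : 0 <= a -> a < b -> b <= 1 ->
  (forall t, a < t < b -> ~ equilibrium_models F thetaS t) ->
  ((forall t, a < t < b -> updates_up t) /\
     ~ (forall t, a < t < b -> updates_down t)) \/
  ((forall t, a < t < b -> updates_down t) /\
     ~ (forall t, a < t < b -> updates_up t)).
Proof.
move=> a0 ab b1 no_eq; pose I := [set t | a < t < b].
have I_itv : I = `]a, b[%classic by apply/seteqP; split => t; rewrite /= in_itv.
have I01 t : I t -> 0 < t < 1 by move=> /andP[? ?]; apply/andP; split; lra.
have unitI t : I t -> unit_itv R t.
  by move=> /I01 /andP[? ?]; apply/andP; split; apply: ltW.
have nbhsI t : I t -> nbhs t I.
  by move=> It; apply: open_nbhs_nbhs; split; rewrite // I_itv; exact: itv_open.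
have oU : open (I `&` updates_up).
  rewrite openE => t [It up]; apply: filterI; first exact: nbhsI.
  exact: (near_updates (r := fun s c => s < c) (I01 t It) (@open_lt _) up).
have oV : open (I `&` updates_down).
  rewrite openE => t [It down]; apply: filterI; first exact: nbhsI.
  exact: (near_updates (r := fun s c => c < s) (I01 t It) (@open_gt _) down).
have cover : I `<=` (I `&` updates_up) `|` (I `&` updates_down).
  by move=> t It; case: (updates_up_or_down (no_eq t It)); [left|right].
have disj : I `&` (I `&` updates_up) `&` (I `&` updates_down) = set0.
  apply/seteqP; split => // t [[It [_ up]] [_ down]].
  exact: updates_up_down_disjoint (unitI t It) up down.
have connI : connected I.
  by rewrite I_itv; exact/connected_intervalP/interval_is_interval.
have Im : I ((a + b) / 2) by apply/andP; split; lra.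
have [IU|IV] := connected_open_dichotomy connI oU oV cover disj; [left|right].
- split=> [t /IU [] //|down].
  exact: updates_up_down_disjoint (unitI _ Im) (IU _ Im).2 (down _ Im).
- split=> [t /IV [] //|up].
  exact: updates_up_down_disjoint (unitI _ Im) (up _ Im) (IV _ Im).2.
Qed.

End direction_of_model_updates.

Theorem mainTheorem11
  (R : realType) (X : finType) (d : nat)
  (* Assumption 1: Y compact subset of Euclidean space R^d *)
  (Y : set (euclid R d))
  (hYc : compact (Y : set 'rV[R]_d))
  (hYm : measurable Y)
  (* Assumption 2: Borel probability measure nu on Y *)
  (nu : {measure set (euclid R d) -> \bar R})
  (hnuT : nu setT = 1%E) (hnuY : nu Y = 1%E)
  (* true consequence function Q, given by its densities q(.|x) w.r.t. nu *)
  (q : X -> euclid R d -> R)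
  (hq_meas : forall x, measurable_fun Y (q x))
  (hq_ge0 : forall x y, Y y -> 0 <= q x y)
  (hq_1 : forall x, (\int[nu]_(y in Y) (q x y)%:E = 1)%E)
  (* models Q_theta, theta in [0,1], given by their densities *)
  (qth : R -> X -> euclid R d -> R)
  (hqth_meas : forall (t : R) x, unit_itv R t -> measurable_fun Y (qth t x))
  (hqth_ge0 : forall (t : R) x y, unit_itv R t -> Y y -> 0 <= qth t x y)
  (hqth_1 : forall (t : R) x, unit_itv R t ->
     (\int[nu]_(y in Y) (qth t x y)%:E = 1)%E)
  (* theta |-> q_theta(y|x) continuous, Q(.|x)-a.s. *)
  (hcont : forall x, {ae nu, forall y, Y y -> 0 < q x y ->
     {within unit_itv R, continuous (fun t : R => qth t x y)}})
  (* L^2(Q(.|x)) domination of the log-likelihood ratio *)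
  (hdom : forall x, exists g : euclid R d -> R,
     measurable_fun Y g /\
     (\int[nu]_(y in Y) ((g y ^+ 2 * q x y)%:E) < +oo)%E /\
     (forall t : R, unit_itv R t ->
        {ae nu, forall y, Y y -> 0 < q x y ->
           `| ln (q x y / qth t x y) | <= g y}))
  (* Assumption 3: a prior with full support on Theta *)
  (mu0 : {measure set (BorelR R) -> \bar R})
  (hmu0 : inDeltaTheta mu0) (hmu0supp : full_support01 mu0)
  (* Assumption 4: nonempty-valued upper hemicontinuous policy correspondence *)
  (F : {measure set (BorelR R) -> \bar R} -> set X)
  (hFne : forall mu, inDeltaTheta mu -> F mu !=set0)
  (hFuhc : uhc F)
  (* Assumption 5: identifiability; thetaS sigma = theta(sigma) *)
  (thetaS : (X -> R) -> R)
  (hA5i : forall sigma, inDeltaX sigma ->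
     unique_minimizer01 (fun t => KLD nu Y q qth t sigma) (thetaS sigma))
  (hA5ii : forall sigma, inDeltaX sigma -> 0 < thetaS sigma < 1 ->
     twice_diff_pos2 (fun t => KLD nu Y q qth t sigma) (thetaS sigma))
  (* Theta^* finite *)
  (hfin : finite_set (equilibrium_models F thetaS)) :
  (* for consecutive points a < b of Theta^* u {0,1} *)
  forall a b : R,
    (equilibrium_models F thetaS `|` [set 0; 1]) a ->
    (equilibrium_models F thetaS `|` [set 0; 1]) b ->
    a < b ->
    (forall c, (equilibrium_models F thetaS `|` [set 0; 1]) c -> ~ (a < c < b)) ->
    let P_up := forall t, a < t < b ->
                  forall x, F (dirac_at t) x -> thetaS (pmass R x) > t in
    let P_down := forall t, a < t < b ->
                  forall x, F (dirac_at t) x -> thetaS (pmass R x) < t in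
    (P_up /\ ~ P_down) \/ (P_down /\ ~ P_up).
Proof.
move=> a b Sa Sb ab consecutive P_up P_down.
pose k x t := Rintegral nu Y (fun y => ln (q x y / qth t x y) * q x y).
have k_cont x : {within unit_itv R, continuous (k x)}.
  have [g [mg [g2q_int llr_le]]] := hdom x.
  apply: (continuous_llr_integral hYm (hq_meas x) (hq_ge0 x) _ _ _ (hcont x)
    mg g2q_int llr_le).
  - by rewrite hq_1 ltry.
  - by move=> t; exact: hqth_meas.
  - by move=> t y; exact: hqth_ge0.
have unit_ends c : (equilibrium_models F thetaS `|` [set 0; 1]) c -> unit_itv R c.
  case=> [/(equilibrium_models_unit (k := k) hA5i) //|[->|->]].
  - by rewrite /unit_itv /= lexx ler01.
  - by rewrite /unit_itv /= lexx ler01.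
have /andP[a0 _] := unit_ends a Sa; have /andP[_ b1] := unit_ends b Sb.
apply: (updates_up_xor_down k_cont hA5i hFne hFuhc a0 ab b1).
by move=> t tab Et; apply: (consecutive t) tab; left.
Qed.
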